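(* Let $g:[-1,1]\to\mathbb{R}$ be the constant function $g(x)=1/2$. For every univariate ReLU neural network $f:\mathbb{R}\to\mathbb{R}$ of any depth and any layer widths whose biases are all zero, one has $$\int_{-1}^{1}\big(g(x)-f(x)\big)^2\,dx\;\ge\;\frac18 .$$ Consequently, for any $\epsilon<1/8$ there is no such bias-free ReLU network approximating $g$ to squared-error (MSE integral) at most $\epsilon$ on $[-1,1]$.
   Context: A bias-free ReLU network computes $x\mapsto \bm{W}^{(L)}\phi(\bm{W}^{(L-1)}\cdots\phi(\bm{W}^{(1)}x))$ (with the output layer either linear or also followed by $\phi$), where $\phi(x)=\max(x,0)$ is applied componentwise and the $\bm{W}^{(l)}$ are real matrices of compatible sizes. *)

From HB Require Import structures.
From mathcomp Require Import all_boot all_order all_algebra.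
From mathcomp Require Import all_classical all_reals all_analysis.
Set Implicit Arguments. Unset Strict Implicit. Unset Printing Implicit Defensive.
Import Order.TTheory GRing.Theory Num.Theory.
Local Open Scope ring_scope.

Definition relu {R : realType} (x : R) : R := Num.max x 0.

(* A bias-free ReLU network whose current input has dimension n.
   [Out W]     : final weight matrix W : 'M_(1, n) (output dimension 1).
   [Hid W N]   : hidden layer W : 'M_(m, n) followed by phi componentwise,
                 then the rest of the network N taking input of dimension m. *)
Inductive net (R : realType) : nat -> Type :=
| Out n (W : 'M[R]_(1, n)) : net R n
| Hid n m (W : 'M[R]_(m, n)) (N : net R m) : net R n.

Fixpoint net_eval (R : realType) n (N : net R n) : 'cV[R]_n -> R :=
  match N in net _ k return 'cV[R]_k -> R with
  | Out _ W => fun v => (W *m v) 0 0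
  | Hid _ _ W N' => fun v => net_eval N' (map_mx relu (W *m v))
  end.

Definition realize (R : realType) (N : net R 1) (relu_out : bool) (x : R) : R :=
  let y := net_eval N (const_mx x) in if relu_out then relu y else y.

From HB Require Import structures.
From mathcomp Require Import all_boot all_order all_algebra.
From mathcomp Require Import all_classical all_reals all_analysis.
From mathcomp Require Import measurable_realfun.
From mathcomp Require Import ring lra.
Set Implicit Arguments. Unset Strict Implicit. Unset Printing Implicit Defensive.
Import Order.TTheory GRing.Theory Num.Theory.
Local Open Scope ring_scope.
Local Open Scope classical_set_scope.

(* Without biases every layer commutes with scaling by t >= 0, so a network
   f : R -> R is positively homogeneous: f x = f 1 * x for x >= 0 and
   f x = - f (-1) * x for x <= 0.  On each half of [-1, 1] the squared error
   is therefore that of a line through the origin, and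
   \int_0^1 (1/2 - a x)^2 dx = 1/16 + (a - 3/4)^2 / 3 >= 1/16, with equality
   for the network f x = 3/4 |x|. *)

Section relu_homogeneity.
Variable R : realType.

Lemma ger0_relu (x : R) : 0 <= x -> relu x = x.
Proof. exact: max_idPl. Qed.

Lemma ler0_relu (x : R) : x <= 0 -> relu x = 0.
Proof. exact: max_idPr. Qed.

Lemma relu_pM (t x : R) : 0 <= t -> relu (t * x) = t * relu x.
Proof. by move=> t0; rewrite /relu maxr_pMr // mulr0. Qed.

Lemma net_eval_pZ n (N : net R n) (t : R) (v : 'cV[R]_n) : 0 <= t ->
  net_eval N (t *: v) = t * net_eval N v.
Proof.
move=> t0; elim: N v => [k W|k m W N IH] v /=.
  by rewrite !mxE mulr_sumr; apply: eq_bigr => j _; rewrite !mxE mulrCA.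
rewrite -IH; congr (net_eval N _); apply/matrixP => i j.
rewrite !mxE -relu_pM //; congr relu.
by rewrite mulr_sumr; apply: eq_bigr => l _; rewrite !mxE mulrCA.
Qed.

Definition pos_homogeneous (f : R -> R) :=
  forall t x, 0 <= t -> f (t * x) = t * f x.

Lemma realize_pos_homogeneous (N : net R 1) (relu_out : bool) :
  pos_homogeneous (realize N relu_out).
Proof.
move=> t x t0; rewrite /realize.
have -> : const_mx (t * x) = t *: (const_mx x : 'cV[R]_1).
  by apply/matrixP => i j; rewrite !mxE.
by rewrite net_eval_pZ //; case: relu_out => //; rewrite relu_pM.
Qed.

End relu_homogeneity.

Section pos_homogeneous_theory.
Variables (R : realType) (f : R -> R).
Hypothesis homf : pos_homogeneous f.

Lemma pos_homogeneous_ge0 x : 0 <= x -> f x = f 1 * x.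
Proof. by move=> x0; rewrite -{1}[x]mulr1 homf // mulrC. Qed.

Lemma pos_homogeneous_le0 x : x <= 0 -> f x = - f (-1) * x.
Proof.
move=> x0; rewrite {1}(_ : x = - x * -1); last by rewrite mulrN1 opprK.
by rewrite homf ?oppr_ge0 // !mulNr mulrC.
Qed.

Lemma pos_homogeneous_relu x : f x = f 1 * relu x + f (-1) * relu (- x).
Proof.
have [x0|x0] := leP 0 x.
  by rewrite ger0_relu // ler0_relu ?oppr_le0 // mulr0 addr0 pos_homogeneous_ge0.
rewrite ler0_relu ?ltW // ger0_relu ?oppr_ge0 ?ltW // mulr0 add0r.
by rewrite pos_homogeneous_le0 ?ltW // mulrN mulNr.
Qed.

Lemma pos_homogeneous_measurable : measurable_fun setT f.
Proof.
rewrite (funext pos_homogeneous_relu).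
by apply: measurable_funD; apply: measurable_funM => //; exact: measurable_maxr.
Qed.

End pos_homogeneous_theory.

Section integrals.
Variable R : realType.
Notation mu := (@lebesgue_measure R).

Lemma ge0_integral_itv_split (g : R -> R) (a b c : R) : a <= b -> b <= c ->
  measurable_fun `[a, c] g -> {in `[a, c], forall x, 0 <= g x} ->
  (\int[mu]_(x in `[a, c]) (g x)%:E =
   \int[mu]_(x in `[a, b]) (g x)%:E + \int[mu]_(x in `[b, c]) (g x)%:E)%E.
Proof.
move=> ab bc mg g0.
have mEg : measurable_fun `[a, c] (EFin \o g) by exact: measurableT_comp.
rewrite (@itv_bndbnd_setU _ _ _ (BLeft b)) ?bnd_simp //.
rewrite ge0_integral_setU //.
- rewrite integral_itv_bndo_bndc //; apply: measurable_funS mEg => //.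
  by apply: subset_itvl; rewrite bnd_simp.
- by rewrite -itv_bndbnd_setU ?bnd_simp.
- rewrite -itv_bndbnd_setU ?bnd_simp // => x /mem_set.
  by rewrite lee_fin; exact: g0.
- rewrite disj_set2E; apply/eqP/seteqP; split => x //=.
  by rewrite !in_itv /= => -[/andP[_ xb] /andP[bx _]]; lra.
Qed.

Lemma horner_derivable_oo_LRcontinuous (p : {poly R}) (a b : R) :
  derivable_oo_LRcontinuous (horner p) a b.
Proof.
split.
- by move=> x _; exact: derivable_horner.
- by apply: cvg_at_right_filter; exact: continuous_horner.
- by apply: cvg_at_left_filter; exact: continuous_horner.
Qed.

Lemma integral_deriv_poly (p : {poly R}) (a b : R) : a < b ->
  (\int[mu]_(x in `[a, b]) (p^`().[x])%:E = (p.[b] - p.[a])%:E)%E.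
Proof.
move=> ab; rewrite EFinB (@continuous_FTC2 _ (horner p^`()) (horner p)) //.
- exact/derivable_oo_LRcontinuous_within/horner_derivable_oo_LRcontinuous.
- exact: horner_derivable_oo_LRcontinuous.
- by move=> x _; rewrite -derivE.
Qed.

Definition sqr_half_sub_primitive (a : R) : {poly R} :=
  (1 / 4) *: 'X - (a / 2) *: 'X^2 + (a ^+ 2 / 3) *: 'X^3.

Lemma sqr_half_sub_primitiveE a x :
  (sqr_half_sub_primitive a).[x] = x / 4 - a / 2 * x ^+ 2 + a ^+ 2 / 3 * x ^+ 3.
Proof. by rewrite !hornerE /=; field. Qed.

Lemma deriv_sqr_half_sub_primitive a x :
  (sqr_half_sub_primitive a)^`().[x] = (1 / 2 - a * x) ^+ 2.
Proof.
rewrite !(derivB, derivD, derivZ, derivX, derivXn) !hornerE /=.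
by rewrite !mulr2n; field.
Qed.

Lemma integral_sqr_half_sub a lo hi : lo < hi ->
  (\int[mu]_(x in `[lo, hi]) ((1 / 2 - a * x) ^+ 2)%:E =
   ((sqr_half_sub_primitive a).[hi] - (sqr_half_sub_primitive a).[lo])%:E)%E.
Proof.
move=> lohi; rewrite -integral_deriv_poly //; apply: eq_integral => x _.
by rewrite deriv_sqr_half_sub_primitive.
Qed.

Lemma integral01_sqr_half_sub a :
  (\int[mu]_(x in `[0%R, 1%R]) ((1 / 2 - a * x) ^+ 2)%:E =
   (1 / 16 + (a - 3 / 4) ^+ 2 / 3)%:E)%E.
Proof.
rewrite integral_sqr_half_sub ?ltr01 // !sqr_half_sub_primitiveE.
by congr EFin; rewrite expr0n expr1n /=; field.
Qed.

Lemma integralN10_sqr_half_sub a :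
  (\int[mu]_(x in `[(-1)%R, 0%R]) ((1 / 2 - a * x) ^+ 2)%:E =
   (1 / 16 + (a + 3 / 4) ^+ 2 / 3)%:E)%E.
Proof.
rewrite integral_sqr_half_sub ?ltrN10 // !sqr_half_sub_primitiveE.
by congr EFin; rewrite expr0n /=; field.
Qed.

Lemma pos_homogeneous_sqr_err_ge (f : R -> R) : pos_homogeneous f ->
  ((1 / 8)%:E <= \int[mu]_(x in `[(-1)%R, 1%R]) ((1 / 2 - f x) ^+ 2)%:E)%E.
Proof.
move=> homf.
have mf : measurable_fun `[(-1 : R), 1] (fun x : R => (1 / 2 - f x) ^+ 2).
  apply/measurable_funTS/measurable_funX/measurable_funB => //.
  exact: pos_homogeneous_measurable.
rewrite (@ge0_integral_itv_split _ _ 0) ?lerN10 ?ler01 //; last first.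
  by move=> x _; exact: sqr_ge0.
have -> : (\int[mu]_(x in `[(-1)%R, 0%R]) ((1 / 2 - f x) ^+ 2)%:E =
    \int[mu]_(x in `[(-1)%R, 0%R]) ((1 / 2 - (- f (-1)) * x) ^+ 2)%:E)%E.
  apply: eq_integral => x; rewrite inE /= in_itv /= => /andP[_ x0].
  by rewrite (pos_homogeneous_le0 homf).
have -> : (\int[mu]_(x in `[0%R, 1%R]) ((1 / 2 - f x) ^+ 2)%:E =
    \int[mu]_(x in `[0%R, 1%R]) ((1 / 2 - f 1 * x) ^+ 2)%:E)%E.
  apply: eq_integral => x; rewrite inE /= in_itv /= => /andP[x0 _].
  by rewrite (pos_homogeneous_ge0 homf).
rewrite integralN10_sqr_half_sub integral01_sqr_half_sub -EFinD lee_fin.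
have sum_ge (u v : R) : 0 <= u -> 0 <= v -> 1 / 8 <= 1 / 16 + u + (1 / 16 + v).
  by lra.
by apply: sum_ge; rewrite divr_ge0 ?sqr_ge0.
Qed.

End integrals.

Theorem mainTheorem2 (R : realType) :
  (forall (N : net R 1) (relu_out : bool),
     ((1 / 8 : R)%:E <=
      \int[@lebesgue_measure R]_(x in `[(-1)%R, 1%R])
        ((1 / 2 - realize N relu_out x) ^+ 2)%:E)%E)
  /\
  (forall eps : R, eps < 1 / 8 ->
     ~ exists (N : net R 1) (relu_out : bool),
         (\int[@lebesgue_measure R]_(x in `[(-1)%R, 1%R])
            ((1 / 2 - realize N relu_out x) ^+ 2)%:E <= eps%:E)%E).
Proof.
have lower N relu_out := pos_homogeneous_sqr_err_ge
  (@realize_pos_homogeneous R N relu_out).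
split=> [|eps eps_lt [N [relu_out err_le]]]; first exact: lower.
have := le_trans (lower N relu_out) err_le; rewrite lee_fin => eps_ge.
by rewrite ltNge eps_ge in eps_lt.
Qed.
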